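(* Let $\mathcal C$ be a category with a factorisation system $(\mathcal E,\mathcal M)$ where $\mathcal M$ consists of monomorphisms. Suppose we are given a commuting square $C\to A$, $C\to B$, $a:A\to D$, $b:B\to D$ with $a,b\in\mathcal M$, and suppose that the span $A\leftarrow C\to B$ has a multipushout. Let $P$ be the (unique) instance of this multipushout admitting a morphism $u:P\to D$ of cocones into $A\xrightarrow{a}D\xleftarrow{b}B$, and let $P\to Q\to D$ be the $(\mathcal E,\mathcal M)$-factorisation of $u$. Then $Q\to D$, together with the induced morphisms $A\to P\to Q$ and $B\to P\to Q$ (which lie in $\mathcal M$), is the join $A\vee B$ of the subobjects $a$ and $b$ of $D$ in $\mathcal C_{\mathcal M}$.
   Context: A factorisation system $(\mathcal E,\mathcal M)$ is an orthogonal factorisation system; $\mathcal C_{\mathcal M}$ is the subcategory of $\mathcal C$ with all objects and with morphisms those in $\mathcal M$; subobjects of $D$ in $\mathcal C_{\mathcal M}$ are (isomorphism classes of) morphisms in $\mathcal M$ with codomain $D$, ordered by factorisation through morphisms of $\mathcal M$, and the join is the least upper bound. A multipushout of a span $A\xleftarrow{f}C\xrightarrow{g}B$ is a set $\{A\xrightarrow{h_i}P_i\xleftarrow{k_i}B\}_{i\in I}$ of cocones over the span such that for every cocone $A\xrightarrow{x}D\xleftarrow{y}B$ there are a unique $i\in I$ and a unique $u:P_i\to D$ with $uh_i=x$ and $uk_i=y$; each $P_i$ (with $h_i,k_i$) is an instance of the multipushout. *)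

Set Implicit Arguments.
Set Universe Polymorphism.

(* A (locally small in Type) category, with Leibniz equality on morphisms.
   comp g f  is  g ∘ f  (first f, then g). *)
Record Category := {
  Ob :> Type;
  Hom : Ob -> Ob -> Type;
  idm : forall X, Hom X X;
  comp : forall X Y Z, Hom Y Z -> Hom X Y -> Hom X Z;
  comp_assoc : forall X Y Z W (h : Hom Z W) (g : Hom Y Z) (f : Hom X Y),
      comp h (comp g f) = comp (comp h g) f;
  comp_id_l : forall X Y (f : Hom X Y), comp (idm Y) f = f;
  comp_id_r : forall X Y (f : Hom X Y), comp f (idm X) = f
}.

Arguments Hom {c} _ _.
Arguments idm {c} _.
Arguments comp {c X Y Z} _ _.

Notation "g ∘ f" := (comp g f) (at level 40, left associativity).

Definition morclass (C : Category) := forall X Y : C, @Hom C X Y -> Prop.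

Definition is_iso {C : Category} {X Y : C} (f : Hom X Y) : Prop :=
  exists g : Hom Y X, g ∘ f = idm X /\ f ∘ g = idm Y.

Definition is_mono {C : Category} {X Y : C} (f : Hom X Y) : Prop :=
  forall (Z : C) (x y : Hom Z X), f ∘ x = f ∘ y -> x = y.

Record factorisation_system (C : Category) (E M : morclass C) : Prop := {
  fs_E_iso : forall (X Y : C) (f : Hom X Y), is_iso f -> E X Y f;
  fs_M_iso : forall (X Y : C) (f : Hom X Y), is_iso f -> M X Y f;
  fs_E_comp : forall (X Y Z : C) (g : Hom Y Z) (f : Hom X Y),
      E _ _ f -> E _ _ g -> E _ _ (g ∘ f);
  fs_M_comp : forall (X Y Z : C) (g : Hom Y Z) (f : Hom X Y),
      M _ _ f -> M _ _ g -> M _ _ (g ∘ f);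
  fs_factor : forall (X Y : C) (f : Hom X Y),
      exists (Z : C) (e : Hom X Z) (m : Hom Z Y), E _ _ e /\ M _ _ m /\ m ∘ e = f;
  fs_orth : forall (A B X Y : C) (e : Hom A B) (m : Hom X Y)
      (u : Hom A X) (v : Hom B Y),
      E _ _ e -> M _ _ m -> m ∘ u = v ∘ e ->
      exists d : Hom B X, (d ∘ e = u /\ m ∘ d = v) /\
        forall d' : Hom B X, d' ∘ e = u -> m ∘ d' = v -> d' = d
}.

Definition cocone {C : Category} {X A B P : C}
  (f : Hom X A) (g : Hom X B) (h : Hom A P) (k : Hom B P) : Prop :=
  h ∘ f = k ∘ g.

Definition is_multipushout {C : Category} {X A B : C}
  (f : Hom X A) (g : Hom X B)
  (I : Type) (P : I -> C) (h : forall i, Hom A (P i)) (k : forall i, Hom B (P i))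
  : Prop :=
  (forall i, cocone f g (h i) (k i)) /\
  forall (D : C) (x : Hom A D) (y : Hom B D), cocone f g x y ->
    exists (i : I) (u : Hom (P i) D),
      (u ∘ h i = x /\ u ∘ k i = y) /\
      forall (j : I) (v : Hom (P j) D), v ∘ h j = x -> v ∘ k j = y ->
        existT (fun l => Hom (P l) D) j v = existT (fun l => Hom (P l) D) i u.

Definition sub_le {C : Category} (M : morclass C) {X Y D : C}
  (x : Hom X D) (y : Hom Y D) : Prop :=
  exists t : Hom X Y, M _ _ t /\ y ∘ t = x.

Definition is_join {C : Category} (M : morclass C) {A B Q D : C}
  (a : Hom A D) (b : Hom B D) (q : Hom Q D) : Prop :=
  M _ _ q /\ sub_le M a q /\ sub_le M b q /\
  forall (Z : C) (z : Hom Z D), M _ _ z -> sub_le M a z -> sub_le M b z ->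
    sub_le M q z.

(* Since M-morphisms are monic, any M-subobject z of D
   containing a and b carries a cocone (s, t) with z s = a and z t = b; this
   cocone factors through some instance, and composing with z yields a
   factorisation of (a, b), so by uniqueness it is P again, now with
   u = z w.  Orthogonality of e ∈ E against z ∈ M then gives Q ≤ z.  Finally
   M is right-cancellable against M, so every induced morphism lies in M. *)

Section FactorisationSystem.

Context {C : Category} {E M : morclass C}.
Hypothesis FS : factorisation_system E M.
Hypothesis M_mono : forall (X Y : C) (m : Hom X Y), M X Y m -> is_mono m.

Lemma iso_of_E_M_comp {S T D : C} {e : Hom S T} {n : Hom T D} :
  E _ _ e -> M _ _ n -> M _ _ (n ∘ e) -> is_iso e.
Proof.
  intros He Hn Hne.
  assert (Hsq : (n ∘ e) ∘ idm S = n ∘ e) by apply comp_id_r.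
  destruct (fs_orth FS _ _ _ _ e (n ∘ e) (idm S) n He Hne Hsq)
    as [d [[Hde Hnd] _]].
  exists d; split; [exact Hde |].
  apply (M_mono _ _ n Hn).
  rewrite comp_assoc, Hnd, comp_id_r. reflexivity.
Qed.

Lemma M_comp_cancel {S T D : C} (z : Hom T D) {x : Hom S T} :
  M _ _ z -> M _ _ (z ∘ x) -> M _ _ x.
Proof.
  intros Hz Hzx.
  destruct (fs_factor FS _ _ x) as [W [e' [m' [He' [Hm' Hx]]]]].
  assert (Hiso : is_iso e').
  { apply (iso_of_E_M_comp He' (fs_M_comp FS _ _ _ _ _ Hm' Hz)).
    rewrite <- comp_assoc, Hx. exact Hzx. }
  rewrite <- Hx. apply (fs_M_comp FS); [apply (fs_M_iso FS) |]; assumption.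
Qed.

End FactorisationSystem.

Lemma cocone_of_mono_comp {C : Category} {X A B D Z : C}
  {f : Hom X A} {g : Hom X B} {a : Hom A D} {b : Hom B D}
  {z : Hom Z D} {s : Hom A Z} {t : Hom B Z} :
  is_mono z -> cocone f g a b -> z ∘ s = a -> z ∘ t = b -> cocone f g s t.
Proof.
  unfold cocone; intros Hz Hab Hzs Hzt.
  apply Hz. rewrite !comp_assoc, Hzs, Hzt. exact Hab.
Qed.

Lemma multipushout_instance_factor {C : Category} {X A B D Z : C}
  {f : Hom X A} {g : Hom X B}
  {I : Type} {P : I -> C} {h : forall i, Hom A (P i)} {k : forall i, Hom B (P i)}
  (Hmp : is_multipushout f g P h k)
  {i : I} (u : Hom (P i) D) {z : Hom Z D} {s : Hom A Z} {t : Hom B Z} :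
  cocone f g s t -> z ∘ s = u ∘ h i -> z ∘ t = u ∘ k i ->
  exists w : Hom (P i) Z, z ∘ w = u.
Proof.
  intros Hst Hzs Hzt.
  destruct Hmp as [_ Hfactor].
  destruct (Hfactor Z s t Hst) as [j [w [[Hws Hwt] _]]].
  assert (Hc : cocone f g (u ∘ h i) (u ∘ k i)).
  { unfold cocone in *. rewrite <- Hzs, <- Hzt, <- !comp_assoc, Hst. reflexivity. }
  destruct (Hfactor D _ _ Hc) as [i0 [u0 [_ Huniq]]].
  assert (Hzwh : z ∘ w ∘ h j = u ∘ h i) by (rewrite <- comp_assoc, Hws; exact Hzs).
  assert (Hzwk : z ∘ w ∘ k j = u ∘ k i) by (rewrite <- comp_assoc, Hwt; exact Hzt).
  assert (Hj := Huniq j (z ∘ w) Hzwh Hzwk).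
  rewrite <- (Huniq i u eq_refl eq_refl) in Hj.
  (* Transport "factors through z" along the equality of dependent pairs. *)
  pose (through_z := fun p : {l : I & Hom (P l) D} =>
          exists w' : Hom (P (projT1 p)) Z, z ∘ w' = projT2 p).
  assert (Hw : through_z (existT _ j (z ∘ w))) by (exists w; reflexivity).
  rewrite Hj in Hw. exact Hw.
Qed.

Theorem lemma8p4 (C : Category) (E M : morclass C)
  (FS : factorisation_system E M)
  (Mmono : forall (X Y : C) (m : Hom X Y), M X Y m -> is_mono m)
  (X A B D : C) (f : Hom X A) (g : Hom X B) (a : Hom A D) (b : Hom B D)
  (Ha : M _ _ a) (Hb : M _ _ b) (Hsq : a ∘ f = b ∘ g)
  (I : Type) (P : I -> C) (h : forall i, Hom A (P i)) (k : forall i, Hom B (P i))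
  (Hmp : is_multipushout f g P h k)
  (i : I) (u : Hom (P i) D) (Hua : u ∘ h i = a) (Hub : u ∘ k i = b)
  (Q : C) (e : Hom (P i) Q) (m : Hom Q D)
  (He : E _ _ e) (Hm : M _ _ m) (Hfac : m ∘ e = u) :
  M _ _ (e ∘ h i) /\ M _ _ (e ∘ k i) /\
  m ∘ (e ∘ h i) = a /\ m ∘ (e ∘ k i) = b /\
  is_join M a b m.
Proof.
  assert (Eha : m ∘ (e ∘ h i) = a) by (rewrite comp_assoc, Hfac; exact Hua).
  assert (Ekb : m ∘ (e ∘ k i) = b) by (rewrite comp_assoc, Hfac; exact Hub).
  assert (Mh : M _ _ (e ∘ h i))
    by (apply (M_comp_cancel FS Mmono m); [| rewrite Eha]; assumption).
  assert (Mk : M _ _ (e ∘ k i))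
    by (apply (M_comp_cancel FS Mmono m); [| rewrite Ekb]; assumption).
  repeat split; try assumption.
  - exists (e ∘ h i); split; assumption.
  - exists (e ∘ k i); split; assumption.
  - intros Z z Hz [s [_ Hzs]] [t [_ Hzt]].
    assert (Hst : cocone f g s t)
      by exact (cocone_of_mono_comp (Mmono _ _ z Hz) Hsq Hzs Hzt).
    destruct (multipushout_instance_factor Hmp u Hst
                (eq_trans Hzs (eq_sym Hua)) (eq_trans Hzt (eq_sym Hub)))
      as [w Hzw].
    destruct (fs_orth FS _ _ _ _ e z w m He Hz (eq_trans Hzw (eq_sym Hfac)))
      as [d [[_ Hzd] _]].
    exists d; split; [| exact Hzd].
    apply (M_comp_cancel FS Mmono z); [| rewrite Hzd]; assumption.
Qed.
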